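(* Let $K>0$ and let $\eta:[0,K]\to[0,\infty)$ be twice differentiable (one-sided at the endpoints) with $\eta(K)=0$, and set $\phi(k)=k\eta(k)$. Suppose (i) $\eta'(k)\le 0$ for all $k\in[0,K]$, and (ii) $k\eta''(k)+2\eta'(k)\le 0$ for all $k\in[0,K)$ (equivalently $\phi''(k)\le0$ for $k\in[0,K)$). Then for all $\Delta t,\Delta N>0$, the collision-free condition $$\frac{\Delta N}{\Delta t}\ge \sup_{k\in[0,K)}\frac{\phi(k)}{1-k/K}$$ holds if and only if the CFL condition $$\frac{\Delta N}{\Delta t}\ge \max_{k\in[0,K]}\left|-\eta'(k)k^2\right|$$ holds. In particular: for the Greenshields relation $\eta(k)=V(1-k/K)$ ($V>0$), both conditions are equivalent to $\Delta N/\Delta t\ge VK$; and for the triangular relation $\eta(k)=\min\{V,W(K/k-1)\}$ ($V,W>0$, with $\eta'$ taken wherever it exists), both conditions are equivalent to $\Delta N/\Delta t\ge WK$.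
   Context: $\eta$ is a speed-density relation, $\phi$ the corresponding flow-density relation (fundamental diagram), $K$ the jam density, $\Delta t$ a time step and $\Delta N$ a vehicle step. *)

From Stdlib Require Import Reals.
From Coquelicot Require Import Coquelicot.
Open Scope R_scope.

Definition Icc0 (K : R) : R -> Prop := fun k => 0 <= k <= K.

(* Derivative of f at x relative to the set D (one-sided at endpoints of an
   interval): the difference quotient tends to l as y -> x, y in D, y <> x. *)
Definition deriv_within (D : R -> Prop) (f : R -> R) (x l : R) : Prop :=
  limit1_in (fun y => (f y - f x) / (y - x)) (fun y => D y /\ y <> x) l x.

Definition flow (eta : R -> R) (k : R) : R := k * eta k.

Definition cf_bound (eta : R -> R) (K : R) : Rbar :=
  Lub_Rbar (fun y => exists k, 0 <= k < K /\ y = flow eta k / (1 - k / K)).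

Definition cfl_bound (eta' : R -> R) (K : R) : Rbar :=
  Lub_Rbar (fun y => exists k, 0 <= k <= K /\ y = Rabs (- eta' k * k ^ 2)).

(* Same, with eta' taken wherever it exists (derivative relative to [0,K]). *)
Definition cfl_bound_ae (eta : R -> R) (K : R) : Rbar :=
  Lub_Rbar (fun y => exists k d, 0 <= k <= K /\ deriv_within (Icc0 K) eta k d
                                 /\ y = Rabs (- d * k ^ 2)).

Definition greenshields (V K : R) (k : R) : R := V * (1 - k / K).

(* Triangular: eta(k) = min{V, W (K/k - 1)}, with the value V at k = 0
   (the limit as k -> 0+, K/k undefined there). *)
Definition triangular (V W K : R) (k : R) : R :=
  if Rle_dec k 0 then V else Rmin V (W * (K / k - 1)).

(* Both bounds equal G := -eta'(K) K^2.  The CFL term -eta'(k) k^2 has derivative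
   -k (k eta''(k) + 2 eta'(k)) >= 0, so its maximum is attained at k = K.  Hence
   eta'(k) >= -G / k^2, and integrating from k to K (where eta vanishes) gives
   k eta(k) <= G (1 - k/K): the flow lies below its tangent at K, so every
   collision-free ratio is at most G, and it tends to G as k -> K because it equals
   -K k (eta(k) - eta(K)) / (k - K).  For Greenshields the ratio is V k and
   eta' = -V/K.  For the triangular relation the ratio attains W K at the critical
   density W K / (V + W), and since min V _ is 1-Lipschitz every one-sided
   derivative satisfies |eta'(k)| <= W K / k^2, with equality at k = K. *)

From Stdlib Require Import Reals Lra.
From Coquelicot Require Import Coquelicot.
Open Scope R_scope.

Lemma limit1_in_le (f g : R -> R) (D : R -> Prop) (l m x : R) :
  adhDa D x -> (forall y, D y -> f y <= g y) ->
  limit1_in f D l x -> limit1_in g D m x -> l <= m.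
Proof.
  intros Hadh Hfg Hf Hg.
  destruct (Rle_or_lt l m) as [|Hlt]; [assumption | exfalso].
  destruct (Hf ((l - m) / 2) ltac:(lra)) as [a1 [Ha1 Hf1]].
  destruct (Hg ((l - m) / 2) ltac:(lra)) as [a2 [Ha2 Hg1]].
  destruct (Hadh (Rmin a1 a2) (Rmin_glb_lt _ _ _ Ha1 Ha2)) as [y [Dy Hy]].
  assert (Hfy := Hf1 y (conj Dy (Rlt_le_trans _ _ _ Hy (Rmin_l a1 a2)))).
  assert (Hgy := Hg1 y (conj Dy (Rlt_le_trans _ _ _ Hy (Rmin_r a1 a2)))).
  unfold Rdist in Hfy, Hgy. apply Rabs_def2 in Hfy, Hgy.
  specialize (Hfg y Dy). lra.
Qed.

Lemma limit1_in_Rabs_le (f g : R -> R) (D : R -> Prop) (l m x : R) :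
  adhDa D x -> (forall y, D y -> Rabs (f y) <= g y) ->
  limit1_in f D l x -> limit1_in g D m x -> Rabs l <= m.
Proof.
  intros Hadh Hfg Hf Hg. apply Rabs_le. split.
  - rewrite <- (Ropp_involutive l). apply Ropp_le_contravar.
    apply (limit1_in_le (fun y => - f y) g D (- l) m x Hadh); auto using limit_Ropp.
    intros y Dy. specialize (Hfg y Dy). apply Rabs_le_between in Hfg. lra.
  - apply (limit1_in_le f g D l m x Hadh); auto.
    intros y Dy. specialize (Hfg y Dy). apply Rabs_le_between in Hfg. lra.
Qed.

Lemma limit1_in_local (f : R -> R) (D : R -> Prop) (l x r : R) : 0 < r ->
  limit1_in f (fun y => D y /\ Rabs (y - x) < r) l x -> limit1_in f D l x.
Proof.
  intros Hr Hf eps Heps. destruct (Hf eps Heps) as [a [Ha Hfa]].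
  exists (Rmin a r). split; [now apply Rmin_glb_lt|].
  intros y [Dy Hy]. apply Hfa. unfold Rdist in Hy.
  repeat split; [assumption | |]; eapply Rlt_le_trans; eauto using Rmin_l, Rmin_r.
Qed.

Lemma adhDa_interval_end (a b x : R) : a < b -> x = a \/ x = b ->
  adhDa (fun y => a < y < b) x.
Proof.
  intros Hab Hx del Hdel.
  set (t := Rmin del (b - a) / 2).
  assert (Ht : 0 < t) by (apply Rdiv_lt_0_compat; [apply Rmin_glb_lt|]; lra).
  assert (Ht1 := Rmin_l del (b - a)). assert (Ht2 := Rmin_r del (b - a)).
  unfold Rdist. destruct Hx as [-> | ->].
  - exists (a + t). replace (a + t - a) with t by ring.
    rewrite Rabs_pos_eq; unfold t in *; lra.
  - exists (b - t). replace (b - t - b) with (- t) by ring.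
    rewrite Rabs_Ropp, Rabs_pos_eq; unfold t in *; lra.
Qed.

Lemma adhDa_weaken (D D' : R -> Prop) (x : R) : (forall y, D y -> D' y) ->
  adhDa D x -> adhDa D' x.
Proof.
  intros HD Hadh del Hdel. destruct (Hadh del Hdel) as [y [Dy Hy]].
  exists y. split; [apply HD, Dy | exact Hy].
Qed.

Lemma adhDa_Icc0_punctured (K k : R) : 0 < K -> 0 <= k <= K ->
  adhDa (fun y => Icc0 K y /\ y <> k) k.
Proof.
  intros HK Hk. destruct (Req_dec k K) as [-> | HkK].
  - apply adhDa_weaken with (fun y => 0 < y < K); [unfold Icc0; intros; lra|].
    apply adhDa_interval_end; auto.
  - apply adhDa_weaken with (fun y => k < y < K); [unfold Icc0; intros; lra|].
    apply adhDa_interval_end; lra.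
Qed.

Lemma limit1_in_deriv_within (D : R -> Prop) (f : R -> R) (x l : R) :
  deriv_within D f x l -> limit1_in f (fun y => D y /\ y <> x) (f x) x.
Proof.
  intro Hd.
  assert (H : limit1_in (fun y => f x + (f y - f x) / (y - x) * (y - x))
                (fun y => D y /\ y <> x) (f x + l * (x - x)) x).
  { apply limit_plus; [apply (limit_free (fun _ => f x) _ x x)|].
    apply limit_mul; [exact Hd|].
    apply limit_minus; [apply lim_x | apply (limit_free (fun _ => x) _ x x)]. }
  replace (f x + l * (x - x)) with (f x) in H by ring.
  eapply limit1_ext; [|exact H]. intros y [_ Hy]. field. lra.
Qed.

Lemma limit1_in_continuity_pt (g : R -> R) (D : R -> Prop) (x : R) :
  continuity_pt g x -> limit1_in g D (g x) x.
Proof.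
  intros Hg eps Heps. destruct (Hg eps Heps) as [a [Ha Hga]].
  exists a. split; [exact Ha|]. intros y [_ Hy].
  destruct (Req_dec y x) as [-> | Hne].
  - rewrite Rdist_eq. lra.
  - apply Hga. split; [split; [exact I | auto] | exact Hy].
Qed.

Lemma limit1_in_deriv_within_Icc0 (K a b x l : R) (f : R -> R) :
  0 <= a -> b <= K -> x = a \/ x = b -> deriv_within (Icc0 K) f x l ->
  limit1_in f (fun y => a < y < b) (f x) x.
Proof.
  intros Ha Hb Hx Hd. apply limit1_imp with (fun y => Icc0 K y /\ y <> x).
  - intros y Hy. unfold Icc0. split; [lra|]. destruct Hx; subst; lra.
  - exact (limit1_in_deriv_within _ _ _ _ Hd).
Qed.

Lemma deriv_within_Icc0_is_derive (K x l : R) (f : R -> R) : 0 < x < K ->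
  deriv_within (Icc0 K) f x l -> is_derive f x l.
Proof.
  intros Hx Hd. apply is_derive_Reals. intros eps Heps.
  destruct (Hd eps Heps) as [a [Ha Hq]].
  set (r := Rmin a (Rmin x (K - x))).
  assert (Hr : 0 < r) by (apply Rmin_glb_lt; [lra | apply Rmin_glb_lt; lra]).
  assert (Hr1 := Rmin_l a (Rmin x (K - x))). assert (Hr2 := Rmin_r a (Rmin x (K - x))).
  assert (Hr3 := Rmin_l x (K - x)). assert (Hr4 := Rmin_r x (K - x)).
  fold r in Hr1, Hr2.
  exists (mkposreal r Hr). intros h Hh0 Hh. simpl in Hh.
  apply Rabs_lt_between in Hh.
  replace ((f (x + h) - f x) / h) with ((f (x + h) - f x) / (x + h - x)) by (f_equal; ring).
  apply Hq. unfold Icc0, Rdist. replace (x + h - x) with h by ring.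
  repeat split; try lra. apply Rabs_lt_between. lra.
Qed.

Lemma nondecreasing_open_interval (f df : R -> R) (a b : R) :
  (forall x, a < x < b -> is_derive f x (df x)) -> (forall x, a < x < b -> 0 <= df x) ->
  forall x y, a < x -> x <= y -> y < b -> f x <= f y.
Proof.
  intros Hd Hpos x y Hax Hxy Hyb.
  destruct (MVT_gen f x y df) as [c [Hc Hmvt]].
  - intros z Hz. apply Hd. rewrite Rmin_left, Rmax_right in Hz by lra. lra.
  - intros z Hz. rewrite Rmin_left, Rmax_right in Hz by lra.
    apply derivable_continuous_pt. exists (df z). apply is_derive_Reals, Hd. lra.
  - rewrite Rmin_left, Rmax_right in Hc by lra.
    assert (0 <= df c * (y - x)) by (apply Rmult_le_pos; [apply Hpos|]; lra). lra.
Qed.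

Lemma nondecreasing_closed_interval (f df : R -> R) (a b : R) : a <= b ->
  (forall x, a < x < b -> is_derive f x (df x)) -> (forall x, a < x < b -> 0 <= df x) ->
  limit1_in f (fun y => a < y < b) (f a) a -> limit1_in f (fun y => a < y < b) (f b) b ->
  f a <= f b.
Proof.
  intros Hab Hd Hpos Ha Hb.
  destruct (Req_dec a b) as [<- | Hne]; [lra|].
  assert (Hmono := nondecreasing_open_interval f df a b Hd Hpos).
  assert (Hfa : forall y, a < y < b -> f a <= f y).
  { intros y Hy.
    apply (limit1_in_le f (fun _ => f y) (fun z => a < z < y) (f a) (f y) a).
    - apply adhDa_interval_end; lra.
    - intros z Hz. apply Hmono; lra.
    - apply limit1_imp with (fun z => a < z < b); [intros; lra | exact Ha].
    - apply (limit_free (fun _ => f y) _ y a). }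
  apply (limit1_in_le (fun _ => f a) f (fun z => a < z < b) (f a) (f b) b).
  - apply adhDa_interval_end; lra.
  - exact Hfa.
  - apply (limit_free (fun _ => f a) _ a b).
  - exact Hb.
Qed.

Lemma Lub_Rbar_eq_Finite (E : R -> Prop) (C : R) : (forall y, E y -> y <= C) ->
  (forall b, b < C -> exists y, E y /\ b < y) -> Lub_Rbar E = Finite C.
Proof.
  intros Hub Happ. apply is_lub_Rbar_unique. split.
  - intros y Ey. exact (Hub y Ey).
  - intros [r | |] Hr; simpl; auto.
    + destruct (Rle_or_lt C r) as [| Hlt]; [assumption|].
      destruct (Happ r Hlt) as [y [Ey Hy]]. specialize (Hr y Ey). simpl in Hr. lra.
    + destruct (Happ (C - 1) ltac:(lra)) as [y [Ey _]]. exact (Hr y Ey).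
Qed.

Lemma Lub_Rbar_max (E : R -> Prop) (C : R) : (forall y, E y -> y <= C) -> E C ->
  Lub_Rbar E = Finite C.
Proof.
  intros Hub HC. apply Lub_Rbar_eq_Finite; [exact Hub|].
  intros b Hb. exists C. split; assumption.
Qed.

Lemma Lub_Rbar_image_limit (D : R -> Prop) (f : R -> R) (C x : R) : adhDa D x ->
  (forall k, D k -> f k <= C) -> limit1_in f D C x ->
  Lub_Rbar (fun y => exists k, D k /\ y = f k) = Finite C.
Proof.
  intros Hadh Hub Hlim. apply Lub_Rbar_eq_Finite.
  - intros y [k [Dk ->]]. exact (Hub k Dk).
  - intros b Hb. destruct (Hlim (C - b) ltac:(lra)) as [a [Ha Hk]].
    destruct (Hadh a Ha) as [k [Dk Hka]].
    specialize (Hk k (conj Dk Hka)). unfold Rdist in Hk. apply Rabs_lt_between in Hk.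
    exists (f k). split; [exists k; split; auto | lra].
Qed.

Section ConcaveFlow.

Variables (K : R) (eta eta1 eta2 : R -> R).
Hypothesis K_pos : 0 < K.
Hypothesis eta_deriv : forall k, 0 <= k <= K -> deriv_within (Icc0 K) eta k (eta1 k).
Hypothesis eta1_deriv : forall k, 0 <= k <= K -> deriv_within (Icc0 K) eta1 k (eta2 k).
Hypothesis eta_K : eta K = 0.
Hypothesis eta1_nonpos : forall k, 0 <= k <= K -> eta1 k <= 0.
Hypothesis flow_concave : forall k, 0 <= k < K -> k * eta2 k + 2 * eta1 k <= 0.

Lemma cfl_term_le_at_K (k : R) : 0 <= k <= K -> - eta1 k * k ^ 2 <= - eta1 K * K ^ 2.
Proof.
  intros Hk.
  assert (Hlim : forall x, x = k \/ x = K ->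
            limit1_in (fun y => - eta1 y * y ^ 2) (fun y => k < y < K) (- eta1 x * x ^ 2) x).
  { intros x Hx. apply limit_mul; [apply limit_Ropp|].
    - apply (limit1_in_deriv_within_Icc0 K k K x (eta2 x)); try lra.
      apply eta1_deriv. destruct Hx; subst; lra.
    - apply (limit1_in_continuity_pt (fun y => y ^ 2)). reg. }
  apply (nondecreasing_closed_interval (fun x => - eta1 x * x ^ 2)
           (fun x => - x * (x * eta2 x + 2 * eta1 x))); [lra | | | |].
  - intros x Hx.
    assert (Hd := deriv_within_Icc0_is_derive K x _ eta1 ltac:(lra) (eta1_deriv x ltac:(lra))).
    auto_derive; [exists (eta2 x); exact Hd|].
    replace (Derive (fun y => eta1 y) x) with (eta2 x) by (symmetry; apply is_derive_unique, Hd).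
    ring.
  - intros x Hx. assert (H := flow_concave x ltac:(lra)). nra.
  - apply Hlim; auto.
  - apply Hlim; auto.
Qed.

Lemma flow_le_tangent_at_K (k : R) : 0 <= k < K -> flow eta k <= - eta1 K * K * (K - k).
Proof.
  intros Hk. unfold flow.
  assert (HK1 := eta1_nonpos K ltac:(lra)).
  destruct (Req_dec k 0) as [-> | Hk0]; [nra|].
  set (G := - eta1 K * K ^ 2).
  assert (Hlim : forall x, x = k \/ x = K ->
            limit1_in (fun y => eta y - G / y) (fun y => k < y < K) (eta x - G / x) x).
  { intros x Hx. apply limit_minus.
    - apply (limit1_in_deriv_within_Icc0 K k K x (eta1 x)); try lra.
      apply eta_deriv. destruct Hx; subst; lra.
    - apply (limit1_in_continuity_pt (fun y => G / y)). reg. destruct Hx; subst; lra. }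
  assert (Hh : eta k - G / k <= eta K - G / K).
  { apply (nondecreasing_closed_interval (fun x => eta x - G / x)
             (fun x => eta1 x + G / x ^ 2)); [lra | | | apply Hlim; auto | apply Hlim; auto].
    - intros x Hx.
      assert (Hd := deriv_within_Icc0_is_derive K x _ eta ltac:(lra) (eta_deriv x ltac:(lra))).
      auto_derive; [split; [exists (eta1 x); exact Hd | lra] |].
      replace (Derive (fun y => eta y) x) with (eta1 x) by (symmetry; apply is_derive_unique, Hd).
      field. lra.
    - intros x Hx.
      replace (eta1 x + G / x ^ 2) with ((G - - eta1 x * x ^ 2) / x ^ 2) by (field; lra).
      apply Rdiv_le_0_compat; [| apply pow_lt; lra].
      assert (H := cfl_term_le_at_K x ltac:(lra)). unfold G. lra. }
  rewrite eta_K in Hh.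
  assert (Hk' : k * eta k <= k * (G / k - G / K)) by (apply Rmult_le_compat_l; lra).
  replace (k * (G / k - G / K)) with (- eta1 K * K * (K - k)) in Hk' by (unfold G; field; lra).
  exact Hk'.
Qed.

Lemma cf_bound_eq : cf_bound eta K = Finite (- eta1 K * K ^ 2).
Proof.
  apply Lub_Rbar_image_limit with K.
  - apply adhDa_weaken with (fun y => 0 < y < K); [intros; lra|].
    apply adhDa_interval_end; auto.
  - intros k Hk.
    replace (flow eta k / (1 - k / K)) with (K * flow eta k / (K - k)) by (field; lra).
    apply Rle_div_l; [lra|].
    assert (H := flow_le_tangent_at_K k Hk). nra.
  - replace (- eta1 K * K ^ 2) with (- (K * K) * eta1 K) by ring.
    apply limit1_ext with (fun y => - (K * y) * ((eta y - eta K) / (y - K))).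
    { intros y Hy. rewrite eta_K. unfold flow. field. lra. }
    apply limit_mul.
    + apply limit_Ropp, limit_mul; [apply (limit_free (fun _ => K) _ K K) | apply lim_x].
    + apply limit1_imp with (fun y => Icc0 K y /\ y <> K); [unfold Icc0; intros; lra|].
      apply eta_deriv. lra.
Qed.

Lemma cfl_bound_eq : cfl_bound eta1 K = Finite (- eta1 K * K ^ 2).
Proof.
  assert (Hnonneg : forall k, 0 <= k <= K -> 0 <= - eta1 k * k ^ 2).
  { intros k Hk. apply Rmult_le_pos; [| apply pow2_ge_0].
    apply Ropp_0_ge_le_contravar, Rle_ge, eta1_nonpos, Hk. }
  apply Lub_Rbar_max.
  - intros y [k [Hk ->]]. rewrite Rabs_pos_eq by auto. apply cfl_term_le_at_K, Hk.
  - exists K. split; [lra|]. rewrite Rabs_pos_eq; [reflexivity | apply Hnonneg; lra].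
Qed.

End ConcaveFlow.

Lemma greenshields_cf_bound (V K : R) : 0 < K -> 0 <= V ->
  cf_bound (greenshields V K) K = Finite (V * K).
Proof.
  intros HK HV.
  apply Lub_Rbar_image_limit with K.
  - apply adhDa_weaken with (fun y => 0 < y < K); [intros; lra|].
    apply adhDa_interval_end; auto.
  - intros k Hk. unfold flow, greenshields.
    replace (k * (V * (1 - k / K)) / (1 - k / K)) with (V * k) by (field; split; lra).
    nra.
  - apply limit1_ext with (fun k => V * k).
    { intros k Hk. unfold flow, greenshields. field. split; lra. }
    apply limit_mul; [apply (limit_free (fun _ => V) _ K K) | apply lim_x].
Qed.

Lemma greenshields_deriv_within (V K k : R) : 0 < K ->
  deriv_within (Icc0 K) (greenshields V K) k (- (V / K)).
Proof.
  intros HK. apply limit1_ext with (fun _ => - (V / K)).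
  - intros y [_ Hy]. unfold greenshields. field. lra.
  - apply (limit_free (fun _ => - (V / K)) _ k k).
Qed.

Lemma greenshields_cfl_bound_ae (V K : R) : 0 < K -> 0 <= V ->
  cfl_bound_ae (greenshields V K) K = Finite (V * K).
Proof.
  intros HK HV.
  assert (Hval : forall k, 0 <= k <= K -> Rabs (- - (V / K) * k ^ 2) = V / K * k ^ 2).
  { intros k Hk. rewrite Ropp_involutive, Rabs_pos_eq; [reflexivity|].
    apply Rmult_le_pos; [apply Rdiv_le_0_compat; lra | apply pow2_ge_0]. }
  apply Lub_Rbar_max.
  - intros y [k [d [Hk [Hd ->]]]].
    replace d with (- (V / K)) by
      (apply (single_limit _ _ _ _ k (adhDa_Icc0_punctured K k HK Hk)
                (greenshields_deriv_within V K k HK) Hd)).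
    rewrite Hval by exact Hk.
    replace (V * K) with (V / K * K ^ 2) by (field; lra).
    apply Rmult_le_compat_l; [apply Rdiv_le_0_compat; lra|].
    apply pow_incr. exact Hk.
  - exists K, (- (V / K)). split; [lra|]. split; [apply greenshields_deriv_within, HK|].
    rewrite Hval by lra. field. lra.
Qed.

Lemma triangular_pos (V W K k : R) : 0 < k -> triangular V W K k = Rmin V (W * (K / k - 1)).
Proof. intro Hk. unfold triangular. destruct (Rle_dec k 0); [lra | reflexivity]. Qed.

Lemma Rmin_lipschitz_r (c a b : R) : Rabs (Rmin c a - Rmin c b) <= Rabs (a - b).
Proof.
  unfold Rmin. destruct (Rle_dec c a), (Rle_dec c b); unfold Rabs;
    repeat destruct Rcase_abs; lra.
Qed.

Definition critical_density (V W K : R) : R := W * K / (V + W).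

Lemma critical_density_bounds (V W K : R) : 0 < K -> 0 < V -> 0 < W ->
  0 < critical_density V W K < K.
Proof.
  intros HK HV HW. unfold critical_density.
  split; [apply Rdiv_lt_0_compat; nra | apply Rlt_div_l; nra].
Qed.

Lemma triangular_congested (V W K k : R) : 0 < K -> 0 < V -> 0 < W ->
  critical_density V W K <= k -> triangular V W K k = W * (K / k - 1).
Proof.
  intros HK HV HW Hk.
  assert (Hkc := critical_density_bounds V W K HK HV HW).
  assert (Hkc_eq : critical_density V W K * (V + W) = W * K)
    by (unfold critical_density; field; lra).
  rewrite triangular_pos by lra. apply Rmin_right.
  replace (W * (K / k - 1)) with ((W * K - W * k) / k) by (field; lra).
  apply Rle_div_l; [lra | nra].
Qed.

Lemma triangular_cf_bound (V W K : R) : 0 < K -> 0 < V -> 0 < W ->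
  cf_bound (triangular V W K) K = Finite (W * K).
Proof.
  intros HK HV HW.
  assert (Hkc := critical_density_bounds V W K HK HV HW).
  apply Lub_Rbar_max.
  - intros y [k [Hk ->]]. unfold flow.
    replace (k * triangular V W K k / (1 - k / K)) with (K * (k * triangular V W K k) / (K - k))
      by (field; lra).
    apply Rle_div_l; [lra|].
    destruct (Req_dec k 0) as [-> | Hk0]; [nra|].
    rewrite triangular_pos by lra.
    assert (Hmin := Rmin_r V (W * (K / k - 1))).
    assert (H : k * Rmin V (W * (K / k - 1)) <= k * (W * (K / k - 1)))
      by (apply Rmult_le_compat_l; lra).
    replace (k * (W * (K / k - 1))) with (W * (K - k)) in H by (field; lra).
    nra.
  - exists (critical_density V W K). split; [lra|].
    unfold flow. rewrite triangular_congested by (auto; lra). field. lra.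
Qed.

Lemma triangular_deriv_within_le (V W K k d : R) : 0 < K -> 0 <= W -> 0 < k <= K ->
  deriv_within (Icc0 K) (triangular V W K) k d -> Rabs d * k ^ 2 <= W * K.
Proof.
  intros HK HW Hk Hd.
  assert (Hbound : Rabs d <= W * K / (k * k)).
  { apply (limit1_in_Rabs_le (fun y => (triangular V W K y - triangular V W K k) / (y - k))
             (fun y => W * K / (y * k)) (fun y => k / 2 < y < k) d _ k).
    - apply adhDa_interval_end; lra.
    - intros y Hy. rewrite !triangular_pos by lra.
      rewrite Rabs_div by lra. apply Rle_div_l; [apply Rabs_pos_lt; lra|].
      eapply Rle_trans; [apply Rmin_lipschitz_r|].
      replace (W * (K / y - 1) - W * (K / k - 1)) with (W * K / (y * k) * (k - y))
        by (field; lra).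
      rewrite Rabs_mult, Rabs_minus_sym, (Rabs_pos_eq (W * K / (y * k))); [lra|].
      apply Rdiv_le_0_compat; nra.
    - apply limit1_imp with (fun y => Icc0 K y /\ y <> k); [unfold Icc0; intros; lra | exact Hd].
    - apply (limit1_in_continuity_pt (fun y => W * K / (y * k))). reg. nra. }
  apply Rmult_le_compat_r with (r := k ^ 2) in Hbound; [| apply pow2_ge_0].
  replace (W * K / (k * k) * k ^ 2) with (W * K) in Hbound by (field; lra).
  exact Hbound.
Qed.

Lemma triangular_deriv_within_K (V W K : R) : 0 < K -> 0 < V -> 0 < W ->
  deriv_within (Icc0 K) (triangular V W K) K (- (W / K)).
Proof.
  intros HK HV HW.
  assert (Hkc := critical_density_bounds V W K HK HV HW).
  apply limit1_in_local with (K - critical_density V W K); [lra|].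
  replace (- (W / K)) with (- W * / K) by (field; lra).
  apply limit1_ext with (fun y => - W * / y).
  - intros y [[[Hy0 HyK] Hne] Hy]. apply Rabs_lt_between in Hy.
    rewrite !triangular_congested by (auto; lra). field. lra.
  - apply limit_mul; [apply (limit_free (fun _ => - W) _ K K)|].
    apply limit_inv; [apply lim_x | lra].
Qed.

Lemma triangular_cfl_bound_ae (V W K : R) : 0 < K -> 0 < V -> 0 < W ->
  cfl_bound_ae (triangular V W K) K = Finite (W * K).
Proof.
  intros HK HV HW. apply Lub_Rbar_max.
  - intros y [k [d [Hk [Hd ->]]]].
    rewrite Rabs_mult, Rabs_Ropp, (Rabs_pos_eq (k ^ 2)) by apply pow2_ge_0.
    destruct (Req_dec k 0) as [-> | Hk0]; [simpl; nra|].
    apply (triangular_deriv_within_le V W K k d); auto; lra.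
  - exists K, (- (W / K)). split; [lra|].
    split; [apply triangular_deriv_within_K; auto|].
    rewrite Ropp_involutive, Rabs_pos_eq; [field; lra|].
    apply Rmult_le_pos; [apply Rdiv_le_0_compat; lra | apply pow2_ge_0].
Qed.

Theorem theorem4p3 :
  (* main statement *)
  (forall (K : R) (eta eta1 eta2 : R -> R),
     0 < K ->
     (forall k, 0 <= k <= K -> 0 <= eta k) ->
     (forall k, 0 <= k <= K -> deriv_within (Icc0 K) eta k (eta1 k)) ->
     (forall k, 0 <= k <= K -> deriv_within (Icc0 K) eta1 k (eta2 k)) ->
     eta K = 0 ->
     (forall k, 0 <= k <= K -> eta1 k <= 0) ->
     (forall k, 0 <= k < K -> k * eta2 k + 2 * eta1 k <= 0) ->
     forall dt dN : R, 0 < dt -> 0 < dN ->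
       (Rbar_le (cf_bound eta K) (Finite (dN / dt)) <->
        Rbar_le (cfl_bound eta1 K) (Finite (dN / dt))))
  /\
  (* Greenshields *)
  (forall K V : R, 0 < K -> 0 < V ->
     forall dt dN : R, 0 < dt -> 0 < dN ->
       (Rbar_le (cf_bound (greenshields V K) K) (Finite (dN / dt)) <-> dN / dt >= V * K) /\
       (Rbar_le (cfl_bound_ae (greenshields V K) K) (Finite (dN / dt)) <-> dN / dt >= V * K))
  /\
  (* triangular *)
  (forall K V W : R, 0 < K -> 0 < V -> 0 < W ->
     forall dt dN : R, 0 < dt -> 0 < dN ->
       (Rbar_le (cf_bound (triangular V W K) K) (Finite (dN / dt)) <-> dN / dt >= W * K) /\
       (Rbar_le (cfl_bound_ae (triangular V W K) K) (Finite (dN / dt)) <-> dN / dt >= W * K)).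
Proof.
  split; [|split].
  - intros K eta eta1 eta2 HK _ Heta Heta1 HetaK Heta1_nonpos Hconcave dt dN _ _.
    rewrite (cf_bound_eq K eta eta1 eta2), (cfl_bound_eq K eta1 eta2) by assumption.
    reflexivity.
  - intros K V HK HV dt dN _ _.
    rewrite greenshields_cf_bound, greenshields_cfl_bound_ae by lra.
    simpl. split; split; intro; lra.
  - intros K V W HK HV HW dt dN _ _.
    rewrite triangular_cf_bound, triangular_cfl_bound_ae by assumption.
    simpl. split; split; intro; lra.
Qed.
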